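(* Let $(S,U,A,\{R(a)\}_{a\in\mathcal{A}})$ be a random tuple, where $S\in\mathcal{S}$ is an observed feature, $U\in\mathcal{U}$ is an unobserved feature, $A$ is an action taking values in a finite set $\mathcal{A}$, and $R(a)$ (integrable) is the potential reward had action $a$ been taken; the observed reward is $R=\sum_{a\in\mathcal{A}}R(a)\mathbb{I}(A=a)$. Suppose $A$ is generated by a behavior policy $\pi^b(\cdot\mid S,U)$ that may depend on both $S$ and $U$. Let $\pi^\ast$ be the standard optimal policy, $\pi^\ast(a^\ast\mid s)=1$ where $a^\ast=\operatorname{argmax}_{a\in\mathcal{A}}\mathbb{E}[R(a)\mid S=s]$ (assumed unique for every $s$), and let $\nu^\ast$ be the super-policy, $\nu^\ast(a^\ast\mid s,a')=1$ where $a^\ast=\operatorname{argmax}_{a\in\mathcal{A}}\mathbb{E}[R(a)\mid S=s,A=a']$, for all $(s,a')\in\mathcal{S}\times\mathcal{A}$. Then $$\mathcal{V}(\nu^\ast)\ \ge\ \max\{\mathcal{V}(\pi^b),\mathcal{V}(\pi^\ast)\}.$$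
   Context: The super-policy class is $\Omega=\{\nu:\mathcal{S}\times\mathcal{A}\to\mathcal{P}(\mathcal{A})\}$, where $\mathcal{P}(\mathcal{A})$ is the set of probability distributions on $\mathcal{A}$ and the second argument of $\nu$ is the action $A$ recommended by the behavior policy. For $\nu\in\Omega$, its value is $\mathcal{V}(\nu)=\sum_{a\in\mathcal{A}}\mathbb{E}[R(a)\nu(a\mid S,A)]$. For a policy $\pi:\mathcal{S}\to\mathcal{P}(\mathcal{A})$, $\mathcal{V}(\pi)=\sum_{a}\mathbb{E}[R(a)\pi(a\mid S)]$. The value of the behavior policy is $\mathcal{V}(\pi^b)=\mathbb{E}[R]=\sum_a\mathbb{E}[R(a)\mathbb{I}(A=a)]$. *)

From HB Require Import structures.
From mathcomp Require Import all_boot all_order all_algebra.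
From mathcomp Require Import all_classical all_reals all_analysis.
Set Implicit Arguments. Unset Strict Implicit. Unset Printing Implicit Defensive.
Import Order.TTheory GRing.Theory Num.Theory.
Local Open Scope classical_set_scope.
Local Open Scope ring_scope.

Section Defs.
Context {dO dS : measure_display} {Omega : measurableType dO}
  {T : measurableType dS} {R : realType} {Act : finType}.
Variable P : probability Omega R.

(* q is a version of E[X | S]: q(S) integrable, q measurable, and
   E[X 1{S in B}] = E[q(S) 1{S in B}] for every measurable B. *)
Definition is_cond_exp_S (S : Omega -> T) (X : Omega -> R) (q : T -> R) : Prop :=
  measurable_fun setT q /\ P.-integrable setT (EFin \o (q \o S)) /\
  forall B : set T, measurable B ->
    (\int[P]_(w in S @^-1` B) (X w)%:E = \int[P]_(w in S @^-1` B) (q (S w))%:E)%E.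

Definition is_cond_exp_SA (S : Omega -> T) (A : Omega -> Act) (X : Omega -> R)
  (g : T -> Act -> R) : Prop :=
  (forall a', measurable_fun setT (g^~ a')) /\
  P.-integrable setT (EFin \o (fun w => g (S w) (A w))) /\
  forall (B : set T) (a' : Act), measurable B ->
    (\int[P]_(w in S @^-1` B `&` A @^-1` [set a']) (X w)%:E =
     \int[P]_(w in S @^-1` B `&` A @^-1` [set a']) (g (S w) a')%:E)%E.

Definition value_super (S : Omega -> T) (A : Omega -> Act) (Rpot : Act -> Omega -> R)
  (nu : T -> Act -> Act -> R) : \bar R :=
  (\sum_(a : Act) \int[P]_w (Rpot a w * nu (S w) (A w) a)%:E)%E.

Definition value_policy (S : Omega -> T) (Rpot : Act -> Omega -> R)
  (pi : T -> Act -> R) : \bar R :=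
  (\sum_(a : Act) \int[P]_w (Rpot a w * pi (S w) a)%:E)%E.

Definition value_behavior (A : Omega -> Act) (Rpot : Act -> Omega -> R) : \bar R :=
  (\sum_(a : Act) \int[P]_w (Rpot a w * (A w == a)%:R)%:E)%E.
End Defs.

From HB Require Import structures.
From mathcomp Require Import all_boot all_order all_algebra.
From mathcomp Require Import all_classical all_reals all_analysis.
From mathcomp Require Import measurable_realfun.
Import Order.TTheory GRing.Theory Num.Theory.
Local Open Scope classical_set_scope.
Local Open Scope ring_scope.

(* Call a super-policy deterministic when it recommends the action u(s, a') to
   an individual with feature s and behaviour action a'.  Conditioning on
   (S, A), its value is sum_a' E[g(u(S, a'), S, a') 1(A = a')], where
   g(a, s, a') = E[R(a) | S = s, A = a'].  The behaviour policy (u(s, a') = a')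
   and pi* (u(s, a') = a*(s)) are deterministic super-policies, and nu*
   maximises the integrand pointwise, so its value dominates both.  The
   conditional mean given S alone enters only through the measurability of
   s |-> a*(s). *)

Lemma sum_mulr_eq_nat (R : pzSemiRingType) (I : finType) (i : I) (F : I -> R) :
  \sum_(j : I) F j * (j == i)%:R = F i.
Proof.
rewrite (bigD1 i) //= eqxx mulr1 big1 ?addr0 // => j /negPf ->.
by rewrite mulr0.
Qed.

Section indicator_integral.
Context {d} {X : measurableType d} {R : realType} (mu : {measure set X -> \bar R}).

Lemma integral_mulr_indicator (E : set X) (h : X -> R) :
  (\int[mu]_(x in E) (h x)%:E = \int[mu]_x (h x * (x \in E)%:R)%:E)%E.
Proof.
rewrite integral_mkcond; apply: eq_integral => x _; rewrite patchE.
by case: ifP => _; rewrite ?mulr1 ?mulr0.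
Qed.

Lemma integrable_mulr_indicator (E : set X) (h : X -> R) : measurable E ->
  mu.-integrable setT (EFin \o h) ->
  mu.-integrable setT (fun x => (h x * (x \in E)%:R)%:E).
Proof.
move=> mE hi.
have := (integrable_mkcond _ mE).1 (integrableS measurableT mE (@subsetT _ _) hi).
apply: eq_integrable => // x _; rewrite patchE.
by case: ifP => _; rewrite ?mulr1 ?mulr0.
Qed.

End indicator_integral.

Lemma measurable_argmax_level {d} {T : measurableType d} {R : realType}
    {I : finType} (q : I -> T -> R) (p : T -> I) :
  (forall i, measurable_fun setT (q i)) ->
  (forall s i, i != p s -> q i s < q (p s) s) ->
  forall i, measurable [set s | p s = i].
Proof.
move=> mq hp i.
have -> : [set s | p s = i] = \bigcap_(j in [set j | j != i]) [set s | q j s < q i s].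
  apply/seteqP; split => s /=; first by move=> <- j; exact: hp.
  move=> lt_i; apply/eqP/contraT => ne.
  have := hp s i; rewrite eq_sym => /(_ ne) /(lt_trans (lt_i _ ne)).
  by rewrite ltxx.
apply: fin_bigcap_measurable => [|j _]; first exact: finite_finset.
have := measurable_fun_ltr (mq j) (mq i) measurableT (Y := [set true]) Logic.I.
by rewrite setTI.
Qed.

Section deterministic_super_policy.
Context {R : realType} {dO dS : measure_display} {Omega : measurableType dO}
  {T : measurableType dS} {Act : finType} (P : probability Omega R)
  (S : Omega -> T) (A : Omega -> Act).
Hypothesis mS : measurable_fun setT S.
Hypothesis mA : forall a, measurable (A @^-1` [set a]).

Definition det_super (u : T -> Act -> Act) : T -> Act -> Act -> R :=
  fun s a' a => (a == u s a')%:R.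

Lemma measurable_SA_event (B : set T) a' :
  measurable B -> measurable (S @^-1` B `&` A @^-1` [set a']).
Proof.
by move=> mB; apply: measurableI; [rewrite -[_ @^-1` _]setTI; exact: mS | exact: mA].
Qed.

Lemma mem_SA_event (B : set T) a' w :
  (w \in S @^-1` B `&` A @^-1` [set a']) = (S w \in B) && (A w == a').
Proof.
apply/idP/andP => [/set_mem [SB Aa]|[/set_mem SB /eqP Aa]]; last exact: mem_set.
by split; [exact: mem_set | apply/eqP].
Qed.

Definition indic_SA (B : set T) (a' : Act) (w : Omega) : R :=
  ((S w \in B) && (A w == a'))%:R.

Lemma integrable_mulr_indic_SA (Y : Omega -> R) (B : set T) a' :
  measurable B -> P.-integrable setT (EFin \o Y) ->
  P.-integrable setT (fun w => (Y w * indic_SA B a' w)%:E).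
Proof.
move=> mB iY; under eq_fun do rewrite /indic_SA -mem_SA_event.
exact: (integrable_mulr_indicator P _ _ (measurable_SA_event B a' mB) iY).
Qed.

Lemma mulr_indic_SA_action (h : Act -> R) (B : set T) a' w :
  h a' * indic_SA B a' w = h (A w) * indic_SA B a' w.
Proof.
by rewrite /indic_SA; have [->|_] := eqVneq (A w) a'; rewrite ?andbF ?mulr0.
Qed.

Lemma integral_cond_exp_SA_indic (X : Omega -> R) (g : T -> Act -> R)
    (B : set T) a' :
  is_cond_exp_SA P S A X g -> measurable B ->
  (\int[P]_w (X w * indic_SA B a' w)%:E =
   \int[P]_w (g (S w) a' * indic_SA B a' w)%:E)%E.
Proof.
move=> [_ [_ eqg]] mB; rewrite /indic_SA.
under eq_integral do rewrite -mem_SA_event.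
under [RHS]eq_integral do rewrite -mem_SA_event.
by rewrite -!integral_mulr_indicator eqg.
Qed.

Section level_sets.
Variable u : T -> Act -> Act.

Lemma indic_SA_levelE a a' w :
  indic_SA [set s | u s a' = a] a' w = (u (S w) a' == a)%:R * (A w == a')%:R.
Proof.
rewrite /indic_SA -natrM mulnb; congr (_ && _)%:R.
by apply/idP/eqP => [/set_mem|/mem_set].
Qed.

Lemma sum_indic_SA_level a w :
  \sum_(a' : Act) indic_SA [set s | u s a' = a] a' w = (a == u (S w) (A w))%:R.
Proof.
under eq_bigr => a' _ do rewrite indic_SA_levelE [A w == _]eq_sym.
by rewrite sum_mulr_eq_nat eq_sym.
Qed.

Lemma sum_mulr_indic_SA_level (F : Act -> R) a' w :
  \sum_(a : Act) F a * indic_SA [set s | u s a' = a] a' w =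
  F (u (S w) a') * (A w == a')%:R.
Proof.
under eq_bigr => a _ do rewrite indic_SA_levelE mulrA mulrAC [_ == a]eq_sym.
exact: sum_mulr_eq_nat.
Qed.

Variables (X : Act -> Omega -> R) (g : Act -> T -> Act -> R).
Hypothesis iX : forall a, P.-integrable setT (EFin \o X a).
Hypothesis hg : forall a, is_cond_exp_SA P S A (X a) (g a).
Hypothesis mu : forall a' a, measurable [set s | u s a' = a].

Let integrable_X_indic a a' :
  P.-integrable setT (fun w => (X a w * indic_SA [set s | u s a' = a] a' w)%:E).
Proof. exact: integrable_mulr_indic_SA (mu a' a) (iX a). Qed.

Let integrable_g_indic a a' :
  P.-integrable setT
    (fun w => (g a (S w) a' * indic_SA [set s | u s a' = a] a' w)%:E).
Proof.
have := integrable_mulr_indic_SA _ _ a' (mu a' a) (hg a).2.1.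
by apply: eq_integrable => // w _; rewrite /= -(mulr_indic_SA_action (g a (S w))).
Qed.

Lemma integrable_det_super_term a' :
  P.-integrable setT (fun w => (g (u (S w) a') (S w) a' * (A w == a')%:R)%:E).
Proof.
have := integrable_sum measurableT (index_enum Act) (P := xpredT)
  (fun a _ => integrable_g_indic a a').
by apply: eq_integrable => // w _; rewrite /= sumEFin sum_mulr_indic_SA_level.
Qed.

Lemma value_det_super :
  value_super P S A X (det_super u) =
    (\sum_(a' : Act) \int[P]_w (g (u (S w) a') (S w) a' * (A w == a')%:R)%:E)%E.
Proof.
transitivity (\sum_(a : Act) \sum_(a' : Act)
    \int[P]_w (X a w * indic_SA [set s | u s a' = a] a' w)%:E)%E.
  apply: eq_bigr => a _.
  rewrite -(integral_sum measurableT (integrable_X_indic a)).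
  by apply: eq_integral => w _; rewrite sumEFin -mulr_sumr sum_indic_SA_level.
transitivity (\sum_(a : Act) \sum_(a' : Act)
    \int[P]_w (g a (S w) a' * indic_SA [set s | u s a' = a] a' w)%:E)%E.
  apply: eq_bigr => a _; apply: eq_bigr => a' _.
  exact: integral_cond_exp_SA_indic.
rewrite exchange_big; apply: eq_bigr => a' _.
rewrite -(integral_sum measurableT (integrable_g_indic^~ a')).
by apply: eq_integral => w _; rewrite sumEFin sum_mulr_indic_SA_level.
Qed.

End level_sets.

Lemma le_value_det_super (X : Act -> Omega -> R) (g : Act -> T -> Act -> R)
    (u u' : T -> Act -> Act) :
  (forall a, P.-integrable setT (EFin \o X a)) ->
  (forall a, is_cond_exp_SA P S A (X a) (g a)) ->
  (forall a' a, measurable [set s | u s a' = a]) ->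
  (forall a' a, measurable [set s | u' s a' = a]) ->
  (forall s a', g (u s a') s a' <= g (u' s a') s a') ->
  (value_super P S A X (det_super u) <= value_super P S A X (det_super u'))%E.
Proof.
move=> iX hg mu mu' le_uu'.
rewrite (value_det_super _ _ _ iX hg mu) (value_det_super _ _ _ iX hg mu').
apply: lee_sum => a' _; apply: (le_integral measurableT).
- exact: (integrable_det_super_term _ _ _ hg mu).
- exact: (integrable_det_super_term _ _ _ hg mu').
- by move=> w _; rewrite lee_fin ler_wpM2r.
Qed.

Lemma value_behavior_det_super (X : Act -> Omega -> R) :
  value_behavior P A X = value_super P S A X (det_super (fun _ a' => a')).
Proof.
by apply: eq_bigr => a _; apply: eq_integral => w _; rewrite /det_super eq_sym.
Qed.

Lemma value_policy_det_super (X : Act -> Omega -> R) (p : T -> Act) :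
  value_policy P S X (fun s a => (a == p s)%:R) =
  value_super P S A X (det_super (fun s _ => p s)).
Proof. by []. Qed.

End deterministic_super_policy.

Lemma measurable_set_prop {d} {T : measurableType d} (Q : Prop) :
  measurable [set _ : T | Q].
Proof.
have [q|nq] := pselect Q.
  by rewrite (_ : [set _ | Q] = setT) //; apply/seteqP; split.
by rewrite (_ : [set _ | Q] = set0) //; apply/seteqP; split.
Qed.

Theorem lemma1 (R : realType) (dO dS dU : measure_display)
  (Omega : measurableType dO) (T : measurableType dS) (TU : measurableType dU)
  (Act : finType) (P : probability Omega R)
  (S : Omega -> T) (U : Omega -> TU) (A : Omega -> Act) (Rpot : Act -> Omega -> R)
  (q : Act -> T -> R) (g : Act -> T -> Act -> R)
  (astar_pi : T -> Act) (astar_nu : T -> Act -> Act) :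
  measurable_fun setT S -> measurable_fun setT U ->
  (forall a, measurable (A @^-1` [set a])) ->
  (forall a, P.-integrable setT (EFin \o Rpot a)) ->
  (* q a is a version of E[R(a) | S = .] *)
  (forall a, is_cond_exp_S P S (Rpot a) (q a)) ->
  (* g a is a version of E[R(a) | S = ., A = .] *)
  (forall a, is_cond_exp_SA P S A (Rpot a) (g a)) ->
  (* astar_pi s is the unique argmax of a |-> E[R(a) | S = s] *)
  (forall s a, a != astar_pi s -> q a s < q (astar_pi s) s) ->
  (* astar_nu s a' is an argmax of a |-> E[R(a) | S = s, A = a'] *)
  (forall s a' a, g a s a' <= g (astar_nu s a') s a') ->
  (forall a' a, measurable [set s | astar_nu s a' = a]) ->
  let nu_star := fun s a' a => ((a == astar_nu s a')%:R : R) in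
  let pi_star := fun s a => ((a == astar_pi s)%:R : R) in
  (maxe (value_behavior P A Rpot) (value_policy P S Rpot pi_star)
     <= value_super P S A Rpot nu_star)%E.
Proof.
(* No assumption on the unobserved U is needed: the bound holds for any joint
   law of (S, U, A, R(.)). *)
move=> mS _ mA iR hq hg hpi hnu mnu /=.
have mpi := measurable_argmax_level _ _ (fun a => (hq a).1) hpi.
rewrite ge_max (value_behavior_det_super _ S) (value_policy_det_super _ _ A).
by apply/andP; split; apply: le_value_det_super => // *; exact: measurable_set_prop.
Qed.
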